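(* Let $\Lambda$ be a row-finite $2$-graph with no sources. Suppose that every vertex of $\Lambda$ has an aperiodic quartet (an $(a,b)$-aperiodic quartet for some positive integers $a,b$). Then $\Lambda$ is strongly aperiodic.
   Context: A $k$-graph is a countable category $\Lambda$ with a functor $d:\Lambda\to\mathbb{N}^k$ satisfying the factorization property: whenever $d(\lambda)=m+n$ there are unique $\mu,\nu$ with $\lambda=\mu\nu$, $d(\mu)=m$, $d(\nu)=n$. $\Lambda^n=d^{-1}(n)$, $\Lambda^0$ the vertices, $r,s$ range and source, $v\Lambda^n w=\{\lambda:r(\lambda)=v,d(\lambda)=n,s(\lambda)=w\}$. Row-finite: each $v\Lambda^n$ finite; no sources: $v\Lambda^{e_i}\ne\emptyset$ for all $v,i$. For $0\le m\le n\le d(\lambda)$, $\lambda(m,n)$ is the unique path with $\lambda=\lambda'\lambda(m,n)\lambda''$, $d(\lambda')=m$, $d(\lambda(m,n))=n-m$. No local periodicity at $v$: for each $m\neq n\in\mathbb{N}^k$ there is $\lambda$ with $r(\lambda)=v$, $d(\lambda)\ge m\vee n$ and $\lambda(m,m+d(\lambda)-(m\vee n))\neq\lambda(n,n+d(\lambda)-(m\vee n))$; aperiodic: no local periodicity at every vertex. Write $v\le w$ iff there is a path with range $v$ and source $w$. $H\subseteq\Lambda^0$ is hereditary if $v\in H$, $v\le w$ imply $w\in H$; saturated if for every $v$: $r^{-1}(v)\ne\emptyset$ and $\{s(\lambda):\lambda\in v\Lambda^{e_i}\}\subseteq H$ for some $i$ imply $v\in H$. For saturated hereditary $H\subsetneq\Lambda^0$,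 $\Gamma(\Lambda\setminus H)$ is the $k$-graph with vertices $\Lambda^0\setminus H$ and morphisms $\{\lambda:s(\lambda)\notin H\}$ (a row-finite $k$-graph with no sources). $\Lambda$ is strongly aperiodic if $\Gamma(\Lambda\setminus H)$ is aperiodic for all saturated hereditary $H\subsetneq\Lambda^0$. An $(a,b)$-aperiodic quartet at $u$ is $(\alpha_1,\alpha_2,\beta_1,\beta_2)$ with $\alpha_1\neq\alpha_2\in u\Lambda^{ae_1}u$, $\beta_1\neq\beta_2\in u\Lambda^{be_2}u$, $\beta_2\alpha_1=\alpha_1\beta_2$, $\beta_2\alpha_2=\alpha_2\beta_2$, $\beta_1\alpha_1=\alpha_2\beta_1$, $\beta_1\alpha_2=\alpha_1\beta_1$. *)

From Stdlib Require Import Arith Lia List ClassicalDescription ProofIrrelevance.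

Definition deg := (nat * nat)%type.
Definition dadd (m n : deg) : deg := (fst m + fst n, snd m + snd n).
Definition dsub (m n : deg) : deg := (fst m - fst n, snd m - snd n).
Definition djoin (m n : deg) : deg := (Nat.max (fst m) (fst n), Nat.max (snd m) (snd n)).
Definition dle (m n : deg) : Prop := fst m <= fst n /\ snd m <= snd n.
Definition e1 : deg := (1, 0).
Definition e2 : deg := (0, 1).

(* A 2-graph: a countable category (objects Obj, morphisms Mor, range rg,
   source sc, identities idm, composition comp (only meaningful on composable
   pairs, i.e. sc f = rg g; comp f g is "f g" with f on the left)) with a
   degree functor dg : Mor -> N^2 satisfying the factorization property. *)
Record twograph := {
  Obj : Type;
  Mor : Type;
  rg : Mor -> Obj;
  sc : Mor -> Obj;
  idm : Obj -> Mor;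
  comp : Mor -> Mor -> Mor;
  dg : Mor -> deg;
  Mor_countable : exists f : Mor -> nat, forall x y, f x = f y -> x = y;
  rg_id : forall v, rg (idm v) = v;
  sc_id : forall v, sc (idm v) = v;
  rg_comp : forall f g, sc f = rg g -> rg (comp f g) = rg f;
  sc_comp : forall f g, sc f = rg g -> sc (comp f g) = sc g;
  comp_id_l : forall f, comp (idm (rg f)) f = f;
  comp_id_r : forall f, comp f (idm (sc f)) = f;
  comp_assoc : forall f g h, sc f = rg g -> sc g = rg h ->
      comp (comp f g) h = comp f (comp g h);
  dg_id : forall v, dg (idm v) = (0, 0);
  dg_comp : forall f g, sc f = rg g -> dg (comp f g) = dadd (dg f) (dg g);
  factorization : forall l m n, dg l = dadd m n ->
      exists mu nu, (sc mu = rg nu /\ comp mu nu = l /\ dg mu = m /\ dg nu = n) /\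
        forall mu' nu', sc mu' = rg nu' -> comp mu' nu' = l -> dg mu' = m -> dg nu' = n ->
          mu' = mu /\ nu' = nu
}.

Arguments rg {_} _.
Arguments sc {_} _.
Arguments idm {_} _.
Arguments comp {_} _ _.
Arguments dg {_} _.

Section Defs.
Variable G : twograph.

Definition row_finite : Prop :=
  forall (v : Obj G) (n : deg), exists l : list (Mor G),
    forall lam, rg lam = v -> dg lam = n -> In lam l.

Definition no_sources : Prop :=
  forall v : Obj G,
    (exists lam : Mor G, rg lam = v /\ dg lam = e1) /\
    (exists lam : Mor G, rg lam = v /\ dg lam = e2).

(* mu = lam(m,n): lam = lam' mu lam'' with d(lam') = m, d(mu) = n - m *)
Definition segment (lam : Mor G) (m n : deg) (mu : Mor G) : Prop :=
  exists l1 l2 : Mor G, sc l1 = rg mu /\ sc mu = rg l2 /\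
    comp (comp l1 mu) l2 = lam /\ dg l1 = m /\ dg mu = dsub n m.

Definition no_local_periodicity (v : Obj G) : Prop :=
  forall m n : deg, m <> n ->
    exists lam : Mor G, rg lam = v /\ dle (djoin m n) (dg lam) /\
      forall mu1 mu2,
        segment lam m (dadd m (dsub (dg lam) (djoin m n))) mu1 ->
        segment lam n (dadd n (dsub (dg lam) (djoin m n))) mu2 ->
        mu1 <> mu2.

Definition aperiodic : Prop := forall v : Obj G, no_local_periodicity v.

Definition vle (v w : Obj G) : Prop := exists lam : Mor G, rg lam = v /\ sc lam = w.

Definition hereditary (H : Obj G -> Prop) : Prop :=
  forall v w, H v -> vle v w -> H w.

Definition saturated (H : Obj G -> Prop) : Prop :=
  forall v : Obj G,
    (exists lam : Mor G, rg lam = v) ->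
    ((forall lam : Mor G, rg lam = v -> dg lam = e1 -> H (sc lam)) \/
     (forall lam : Mor G, rg lam = v -> dg lam = e2 -> H (sc lam))) ->
    H v.

Definition aperiodic_quartet (a b : nat) (u : Obj G) (al1 al2 be1 be2 : Mor G) : Prop :=
  al1 <> al2 /\ be1 <> be2 /\
  rg al1 = u /\ sc al1 = u /\ dg al1 = (a, 0) /\
  rg al2 = u /\ sc al2 = u /\ dg al2 = (a, 0) /\
  rg be1 = u /\ sc be1 = u /\ dg be1 = (0, b) /\
  rg be2 = u /\ sc be2 = u /\ dg be2 = (0, b) /\
  comp be2 al1 = comp al1 be2 /\ comp be2 al2 = comp al2 be2 /\
  comp be1 al1 = comp al2 be1 /\ comp be1 al2 = comp al1 be1.

Definition has_aperiodic_quartet (u : Obj G) : Prop :=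
  exists a b : nat, 0 < a /\ 0 < b /\
    exists al1 al2 be1 be2, aperiodic_quartet a b u al1 al2 be1 be2.

End Defs.

Arguments row_finite : clear implicits.
Arguments no_sources : clear implicits.
Arguments aperiodic : clear implicits.

Lemma sig_ext {A : Type} {P : A -> Prop} (x y : sig P) :
  proj1_sig x = proj1_sig y -> x = y.
Proof.
  destruct x as [x px], y as [y py]; simpl; intros ->.
  f_equal; apply proof_irrelevance.
Qed.

Section Gamma.
Variable G : twograph.
Variable H : Obj G -> Prop.
Hypothesis hH : hereditary G H.

Lemma rg_notH (lam : Mor G) : ~ H (sc lam) -> ~ H (rg lam).
Proof. intros h1 h2; apply h1; apply (hH (rg lam)); [exact h2| exists lam; auto]. Qed.

Definition GObj := {v : Obj G | ~ H v}.
Definition GMor := {lam : Mor G | ~ H (sc lam)}.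

Definition Grg (f : GMor) : GObj := exist _ (rg (proj1_sig f)) (rg_notH _ (proj2_sig f)).
Definition Gsc (f : GMor) : GObj := exist _ (sc (proj1_sig f)) (proj2_sig f).

Lemma Gidm_pf (v : GObj) : ~ H (sc (idm (proj1_sig v))).
Proof. rewrite sc_id; exact (proj2_sig v). Qed.
Definition Gidm (v : GObj) : GMor := exist _ (idm (proj1_sig v)) (Gidm_pf v).

Lemma Gcomp_pf (f g : GMor) (e : sc (proj1_sig f) = rg (proj1_sig g)) :
  ~ H (sc (comp (proj1_sig f) (proj1_sig g))).
Proof. rewrite sc_comp by exact e; exact (proj2_sig g). Qed.

Definition Gcomp (f g : GMor) : GMor :=
  match excluded_middle_informative (sc (proj1_sig f) = rg (proj1_sig g)) with
  | left e => exist _ (comp (proj1_sig f) (proj1_sig g)) (Gcomp_pf f g e)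
  | right _ => f
  end.

Definition Gdg (f : GMor) : deg := dg (proj1_sig f).

Lemma Gcomp_val (f g : GMor) : sc (proj1_sig f) = rg (proj1_sig g) ->
  proj1_sig (Gcomp f g) = comp (proj1_sig f) (proj1_sig g).
Proof.
  intro e; unfold Gcomp; destruct (excluded_middle_informative _); [reflexivity|contradiction].
Qed.

Lemma Gsc_rg (f g : GMor) : Gsc f = Grg g -> sc (proj1_sig f) = rg (proj1_sig g).
Proof. intro e; exact (f_equal (@proj1_sig _ _) e). Qed.

Lemma Gcountable : exists f : GMor -> nat, forall x y, f x = f y -> x = y.
Proof.
  destruct (Mor_countable G) as [f hf].
  exists (fun x => f (proj1_sig x)); intros x y e; apply sig_ext, hf, e.
Qed.

Lemma Grg_id v : Grg (Gidm v) = v.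
Proof. apply sig_ext; simpl; apply rg_id. Qed.
Lemma Gsc_id v : Gsc (Gidm v) = v.
Proof. apply sig_ext; simpl; apply sc_id. Qed.
Lemma Grg_comp f g : Gsc f = Grg g -> Grg (Gcomp f g) = Grg f.
Proof.
  intro e; apply Gsc_rg in e; apply sig_ext; simpl; rewrite Gcomp_val by exact e.
  apply rg_comp, e.
Qed.
Lemma Gsc_comp f g : Gsc f = Grg g -> Gsc (Gcomp f g) = Gsc g.
Proof.
  intro e; apply Gsc_rg in e; apply sig_ext; simpl; rewrite Gcomp_val by exact e.
  apply sc_comp, e.
Qed.
Lemma Gcomp_id_l f : Gcomp (Gidm (Grg f)) f = f.
Proof.
  apply sig_ext; rewrite Gcomp_val; simpl; [apply comp_id_l | apply sc_id].
Qed.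
Lemma Gcomp_id_r f : Gcomp f (Gidm (Gsc f)) = f.
Proof.
  apply sig_ext; rewrite Gcomp_val; simpl; [apply comp_id_r | now rewrite rg_id].
Qed.
Lemma Gcomp_assoc f g h : Gsc f = Grg g -> Gsc g = Grg h ->
  Gcomp (Gcomp f g) h = Gcomp f (Gcomp g h).
Proof.
  intros e1' e2'; apply Gsc_rg in e1'; apply Gsc_rg in e2'.
  apply sig_ext.
  rewrite (Gcomp_val (Gcomp f g) h); [| rewrite Gcomp_val by exact e1'; now rewrite sc_comp].
  rewrite (Gcomp_val f (Gcomp g h)); [| rewrite Gcomp_val by exact e2'; now rewrite rg_comp].
  rewrite !Gcomp_val by assumption. apply comp_assoc; assumption.
Qed.
Lemma Gdg_id v : Gdg (Gidm v) = (0, 0).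
Proof. apply dg_id. Qed.
Lemma Gdg_comp f g : Gsc f = Grg g -> Gdg (Gcomp f g) = dadd (Gdg f) (Gdg g).
Proof.
  intro e; apply Gsc_rg in e; unfold Gdg; rewrite Gcomp_val by exact e; apply dg_comp, e.
Qed.

Lemma Gfactorization : forall l m n, Gdg l = dadd m n ->
  exists mu nu, (Gsc mu = Grg nu /\ Gcomp mu nu = l /\ Gdg mu = m /\ Gdg nu = n) /\
    forall mu' nu', Gsc mu' = Grg nu' -> Gcomp mu' nu' = l -> Gdg mu' = m -> Gdg nu' = n ->
      mu' = mu /\ nu' = nu.
Proof.
  intros [l pl] m n e; unfold Gdg in e; simpl in e.
  destruct (factorization G l m n e) as [mu [nu [[h1 [h2 [h3 h4]]] hu]]].
  assert (pnu : ~ H (sc nu)) by (rewrite <- h2 in pl; rewrite sc_comp in pl; auto).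
  assert (pmu : ~ H (sc mu)) by (rewrite h1; apply rg_notH; exact pnu).
  exists (exist _ mu pmu), (exist _ nu pnu); split.
  - repeat split; try assumption.
    + apply sig_ext; exact h1.
    + apply sig_ext; rewrite Gcomp_val by exact h1; exact h2.
  - intros mu' nu' f1 f2 f3 f4.
    pose proof (Gsc_rg _ _ f1) as f1'.
    assert (f2' : comp (proj1_sig mu') (proj1_sig nu') = l)
      by (rewrite <- Gcomp_val by exact f1'; rewrite f2; reflexivity).
    destruct (hu _ _ f1' f2' f3 f4) as [u1 u2]; split; apply sig_ext; assumption.
Qed.

Definition Gamma : twograph :=
  {| Obj := GObj; Mor := GMor; rg := Grg; sc := Gsc; idm := Gidm; comp := Gcomp; dg := Gdg;
     Mor_countable := Gcountable; rg_id := Grg_id; sc_id := Gsc_id;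
     rg_comp := Grg_comp; sc_comp := Gsc_comp; comp_id_l := Gcomp_id_l;
     comp_id_r := Gcomp_id_r; comp_assoc := Gcomp_assoc; dg_id := Gdg_id;
     dg_comp := Gdg_comp; factorization := Gfactorization |}.

End Gamma.

Definition strongly_aperiodic (G : twograph) : Prop :=
  forall (H : Obj G -> Prop) (hH : hereditary G H),
    saturated G H -> (exists v, ~ H v) -> aperiodic (Gamma G H hH).

From Stdlib Require Import Arith Lia Classical.

(* Local periodicity at [v] with [m <> n] means that the shifts [σ^m] and [σ^n]
   agree on paths from [v].  Then so do [σ^(k m)] and [σ^(k n)], since
   [σ^((k+1) m) = σ^(k m) σ^m = σ^(k m) σ^n = σ^n σ^(k m) = σ^n σ^(k n)];
   for [k = a b] both degrees lie on the lattice [a N x b N] of an [(a,b)]-quartet.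
   Paths built from the quartet separate two distinct lattice points: if their
   first coordinates differ, [β2^N α1^(p+1) α2^q] carries [α1] at one and [α2] at
   the other (the [β2]-prefix slides past the [α]'s, which commute with [β2]); if
   only the second coordinates differ, [α1^p β1^(p'+1) β2^q] carries [β1] and [β2].
   Quartets of [Λ] are quartets of [Γ(Λ \ H)]. *)

Definition dmul (k : nat) (m : deg) : deg := (k * fst m, k * snd m).

Ltac deg_arith :=
  repeat match goal with x : deg |- _ => destruct x end;
  unfold dle, dadd, dsub, djoin, dmul in *; simpl in *; try split; try f_equal; nia.

Lemma dadd_cancel_l (c m n : deg) : dadd c m = dadd c n -> m = n.
Proof. intro e; injection e; intros; deg_arith. Qed.

Section Segments.
Variable G : twograph.

(* [seg lam c s mu] says [mu = lam(c, c + s)]. *)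
Definition seg (lam : Mor G) (c s : deg) (mu : Mor G) : Prop :=
  exists l1 l2 : Mor G, sc l1 = rg mu /\ sc mu = rg l2 /\
    comp (comp l1 mu) l2 = lam /\ dg l1 = c /\ dg mu = s.

Lemma factorization_unique (mu nu mu' nu' : Mor G) :
  sc mu = rg nu -> sc mu' = rg nu' -> comp mu nu = comp mu' nu' -> dg mu = dg mu' ->
  mu = mu' /\ nu = nu'.
Proof.
  intros h h' e d.
  assert (dl : dg (comp mu nu) = dadd (dg mu) (dg nu)) by now apply dg_comp.
  assert (dnu : dg nu' = dg nu).
  { apply (dadd_cancel_l (dg mu)). rewrite <- dl, e, dg_comp by exact h'. now rewrite d. }
  destruct (factorization G _ _ _ dl) as (x & y & _ & uniq).
  destruct (uniq mu nu h eq_refl eq_refl eq_refl) as [-> ->].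
  destruct (uniq mu' nu' h' (eq_sym e) (eq_sym d) dnu) as [-> ->].
  split; reflexivity.
Qed.

Lemma seg_dg lam c s mu : seg lam c s mu -> dg mu = s.
Proof. intros (l1 & l2 & _ & _ & _ & _ & h); exact h. Qed.

Lemma seg_le lam c s mu : seg lam c s mu -> dle (dadd c s) (dg lam).
Proof.
  intros (l1 & l2 & h1 & h2 & <- & <- & <-).
  assert (h3 : sc (comp l1 mu) = rg l2) by now rewrite sc_comp.
  rewrite (dg_comp G _ _ h3), (dg_comp G _ _ h1). deg_arith.
Qed.

Lemma seg_unique lam c s mu1 mu2 : seg lam c s mu1 -> seg lam c s mu2 -> mu1 = mu2.
Proof.
  intros (l1 & l2 & a1 & a2 & a3 & a4 & a5) (k1 & k2 & b1 & b2 & b3 & b4 & b5).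
  assert (e : comp l1 mu1 = comp k1 mu2).
  { apply (factorization_unique (comp l1 mu1) l2 (comp k1 mu2) k2).
    - now rewrite sc_comp.
    - now rewrite sc_comp.
    - congruence.
    - rewrite (dg_comp G _ _ a1), (dg_comp G _ _ b1). congruence. }
  apply (factorization_unique l1 mu1 k1 mu2); auto; congruence.
Qed.

Lemma seg_exists lam c s : dle (dadd c s) (dg lam) -> exists mu, seg lam c s mu.
Proof.
  intro h.
  assert (e : dg lam = dadd (dadd c s) (dsub (dg lam) (dadd c s))).
  { revert h; generalize (dg lam); intros; deg_arith. }
  destruct (factorization G lam _ _ e) as (x & y & (h1 & h2 & h3 & _) & _).
  destruct (factorization G x c s h3) as (l1 & mu & (k1 & <- & k3 & k4) & _).
  exists mu, l1, y. repeat split; auto.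
  rewrite <- h1. now rewrite sc_comp.
Qed.

Lemma seg_self x : seg x (0,0) (dg x) x.
Proof.
  exists (idm (rg x)), (idm (sc x)). rewrite sc_id, rg_id, comp_id_l, comp_id_r.
  repeat split; auto. apply dg_id.
Qed.

Lemma seg_trans lam c s mu c' s' nu :
  seg lam c s mu -> seg mu c' s' nu -> seg lam (dadd c c') s' nu.
Proof.
  intros (l1 & l2 & a1 & a2 & <- & <- & _) (k1 & k2 & b1 & b2 & <- & <- & <-).
  assert (q1 : sc (comp k1 nu) = rg k2) by now rewrite sc_comp.
  rewrite rg_comp, rg_comp in a1 by auto.
  rewrite sc_comp in a2 by auto.
  exists (comp l1 k1), (comp k2 l2). repeat split.
  - now rewrite sc_comp.
  - now rewrite rg_comp.
  - rewrite <- (comp_assoc G (comp (comp l1 k1) nu) k2 l2), (comp_assoc G l1 k1 nu),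
      (comp_assoc G l1 (comp k1 nu) k2); auto.
    all: repeat first [assumption | rewrite sc_comp | rewrite rg_comp].
  - now rewrite dg_comp.
Qed.

Lemma seg_comp_l x y c s nu : sc x = rg y -> seg x c s nu -> seg (comp x y) c s nu.
Proof.
  intros h (l1 & l2 & a1 & a2 & <- & a4 & a5).
  rewrite sc_comp in h by now rewrite sc_comp.
  exists l1, (comp l2 y). repeat split; auto.
  - now rewrite rg_comp.
  - symmetry; apply comp_assoc; auto. now rewrite sc_comp.
Qed.

Lemma seg_comp_r x y c s nu :
  sc x = rg y -> seg y c s nu -> seg (comp x y) (dadd (dg x) c) s nu.
Proof.
  intro h. apply (seg_trans _ _ (dg y) y).
  exists x, (idm (sc y)). rewrite rg_id. repeat split; auto.
  rewrite <- (sc_comp G x y h). apply comp_id_r.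
Qed.

End Segments.

Section Loops.
Variables (G : twograph) (v : Obj G).

Definition loop (x : Mor G) : Prop := rg x = v /\ sc x = v.

Fixpoint power (x : Mor G) (k : nat) : Mor G :=
  match k with 0 => idm v | S k => comp x (power x k) end.

Definition commute (x y : Mor G) : Prop := comp x y = comp y x.

Lemma loop_composable x y : loop x -> loop y -> sc x = rg y.
Proof. intros [_ h1] [h2 _]; congruence. Qed.

Lemma loop_comp x y : loop x -> loop y -> loop (comp x y).
Proof.
  intros hx hy. pose proof (loop_composable x y hx hy).
  split; [rewrite rg_comp | rewrite sc_comp]; auto; [apply hx | apply hy].
Qed.

Lemma loop_power x k : loop x -> loop (power x k).
Proof.
  intro h; induction k; simpl.
  - split; [apply rg_id | apply sc_id].
  - now apply loop_comp.
Qed.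

Lemma loop_comp_assoc x y z :
  loop x -> loop y -> loop z -> comp (comp x y) z = comp x (comp y z).
Proof. intros; apply comp_assoc; apply loop_composable; auto. Qed.

Lemma dg_power x k : loop x -> dg (power x k) = dmul k (dg x).
Proof.
  intro h; induction k; simpl.
  - apply dg_id.
  - rewrite dg_comp by (apply loop_composable; auto using loop_power).
    rewrite IHk. deg_arith.
Qed.

Lemma power_add x i j : loop x -> power x (i + j) = comp (power x i) (power x j).
Proof.
  intro h; induction i; simpl.
  - destruct (loop_power x j h) as [<- _]. symmetry; apply comp_id_l.
  - rewrite IHi, loop_comp_assoc; auto using loop_power.
Qed.

Lemma seg_power x k i : loop x -> i < k -> seg G (power x k) (dmul i (dg x)) (dg x) x.
Proof.
  intros h hi.
  replace k with (i + S (k - i - 1)) by lia.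
  rewrite power_add by exact h.
  replace (dmul i (dg x)) with (dadd (dg (power x i)) (0,0))
    by (rewrite dg_power by exact h; deg_arith).
  apply seg_comp_r; [apply loop_composable; auto using loop_power, loop_comp|].
  apply seg_comp_l; [apply loop_composable; auto using loop_power | apply seg_self].
Qed.

Lemma seg_power_power_l x y p q i :
  loop x -> loop y -> i < p -> seg G (comp (power x p) (power y q)) (dmul i (dg x)) (dg x) x.
Proof.
  intros hx hy hi.
  apply seg_comp_l; [apply loop_composable; auto using loop_power | now apply seg_power].
Qed.

Lemma seg_power_power_r x y p q i : loop x -> loop y -> dg x = dg y -> p <= i < p + q ->
  seg G (comp (power x p) (power y q)) (dmul i (dg y)) (dg y) y.
Proof.
  intros hx hy d hi.
  replace (dmul i (dg y)) with (dadd (dg (power x p)) (dmul (i - p) (dg y)))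
    by (rewrite dg_power, d by exact hx; deg_arith).
  apply seg_comp_r; [apply loop_composable; auto using loop_power|].
  apply seg_power; auto; lia.
Qed.

Lemma commute_comp x y z :
  loop x -> loop y -> loop z -> commute x y -> commute x z -> commute x (comp y z).
Proof.
  unfold commute; intros hx hy hz exy exz.
  rewrite <- loop_comp_assoc, exy, loop_comp_assoc, exz, loop_comp_assoc; auto.
Qed.

Lemma commute_power x y k : loop x -> loop y -> commute x y -> commute x (power y k).
Proof.
  intros hx hy e; induction k; simpl.
  - unfold commute. destruct hx as [hr hs].
    rewrite <- hs at 1. rewrite comp_id_r, <- hr, comp_id_l. reflexivity.
  - apply commute_comp; auto using loop_power.
Qed.

Lemma seg_commuting_prefix x A N Y c s w :
  loop x -> loop A -> commute A x -> Y <= N -> seg G A c s w ->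
  seg G (comp (power x N) A) (dadd (dmul Y (dg x)) c) s w.
Proof.
  intros hx hA e hY hs.
  replace N with (Y + (N - Y)) by lia.
  rewrite power_add, loop_comp_assoc by auto using loop_power.
  assert (eA : commute A (power x (N - Y))) by now apply commute_power.
  rewrite <- eA, <- (dg_power x Y hx).
  apply seg_comp_r; [apply loop_composable; auto using loop_power, loop_comp|].
  apply seg_comp_l; [apply loop_composable; auto using loop_power | exact hs].
Qed.

End Loops.

Section Periodicity.
Variables (G : twograph) (v : Obj G).

(* Finite-path form of [σ^m x = σ^n x] for every infinite path [x] with range [v]. *)
Definition shifts_agree (m n : deg) : Prop :=
  forall lam t s mu1 mu2, rg lam = v ->
    seg G lam (dadd m t) s mu1 -> seg G lam (dadd n t) s mu2 -> mu1 = mu2.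

Lemma shifts_agree_sym m n : shifts_agree m n -> shifts_agree n m.
Proof. intros h lam t s mu1 mu2 hr s1 s2. symmetry. exact (h lam t s mu2 mu1 hr s2 s1). Qed.

Lemma shifts_agree_mul k m n : shifts_agree m n -> shifts_agree (dmul k m) (dmul k n).
Proof.
  intro h. induction k as [|k IH]; intros lam t s mu1 mu2 hr s1 s2.
  - apply (seg_unique G lam (dadd (dmul 0 m) t) s); [exact s1|].
    replace (dadd (dmul 0 m) t) with (dadd (dmul 0 n) t) by deg_arith. exact s2.
  - destruct (seg_exists G lam (dadd (dmul k m) (dadd n t)) s) as [mid hmid].
    { pose proof (seg_le G _ _ _ _ s1) as l1. pose proof (seg_le G _ _ _ _ s2) as l2.
      revert l1 l2; generalize (dg lam); intros; deg_arith. }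
    transitivity mid.
    + apply (h lam (dadd (dmul k m) t) s); auto.
      * replace (dadd m (dadd (dmul k m) t)) with (dadd (dmul (S k) m) t)
          by deg_arith. exact s1.
      * replace (dadd n (dadd (dmul k m) t)) with (dadd (dmul k m) (dadd n t))
          by deg_arith. exact hmid.
    + apply (IH lam (dadd n t) s); auto.
      replace (dadd (dmul k n) (dadd n t)) with (dadd (dmul (S k) n) t) by deg_arith.
      exact s2.
Qed.

Lemma no_local_periodicity_of_shifts :
  (forall m n, m <> n -> ~ shifts_agree m n) -> no_local_periodicity G v.
Proof.
  intros hs m n hmn. apply NNPP; intro hper. apply (hs m n hmn).
  intros lam t s mu1 mu2 hr s1 s2.
  pose proof (seg_le G _ _ _ _ s1) as l1. pose proof (seg_le G _ _ _ _ s2) as l2.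
  set (k := dsub (dg lam) (djoin m n)).
  assert (hle : dle (djoin m n) (dg lam))
    by (revert l1 l2; generalize (dg lam); intros; deg_arith).
  destruct (seg_exists G lam m k) as [nu1 q1].
  { unfold k; revert hle; generalize (dg lam); intros; deg_arith. }
  destruct (seg_exists G lam n k) as [nu2 q2].
  { unfold k; revert hle; generalize (dg lam); intros; deg_arith. }
  assert (e : nu1 = nu2).
  { apply NNPP; intro hne. apply hper. exists lam. repeat split; try exact hr; try apply hle.
    intros x1 x2 t1 t2.
    assert (E : forall x y : deg, dsub (dadd x y) x = y) by (intros; deg_arith).
    unfold segment in t1, t2. rewrite E in t1, t2. fold k in t1, t2.
    rewrite (seg_unique G _ _ _ _ _ t1 q1), (seg_unique G _ _ _ _ _ t2 q2). exact hne. }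
  subst nu2.
  destruct (seg_exists G nu1 t s) as [rho r].
  { rewrite (seg_dg G _ _ _ _ q1); unfold k.
    revert l1 l2; generalize (dg lam); intros; deg_arith. }
  rewrite (seg_unique G _ _ _ _ _ s1 (seg_trans G _ _ _ _ _ _ _ q1 r)),
    (seg_unique G _ _ _ _ _ s2 (seg_trans G _ _ _ _ _ _ _ q2 r)).
  reflexivity.
Qed.

End Periodicity.

Section Quartet.
Variables (G : twograph) (v : Obj G) (a b : nat) (al1 al2 be1 be2 : Mor G).
Hypotheses (la1 : loop G v al1) (la2 : loop G v al2) (lb1 : loop G v be1) (lb2 : loop G v be2)
  (da1 : dg al1 = (a,0)) (da2 : dg al2 = (a,0)) (db1 : dg be1 = (0,b)) (db2 : dg be2 = (0,b))
  (al_ne : al1 <> al2) (be_ne : be1 <> be2)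
  (c1 : commute G be2 al1) (c2 : commute G be2 al2).

Lemma quartet_separates_columns p1 p2 q1 q2 :
  p1 < q1 -> ~ shifts_agree G v (a * p1, b * p2) (a * q1, b * q2).
Proof.
  intros hp hs.
  set (A := comp (power G v al1 (S p1)) (power G v al2 q1)).
  assert (lA : loop G v A) by (apply loop_comp; apply loop_power; auto).
  assert (cA : commute G A be2).
  { symmetry. apply (commute_comp G v); try apply loop_power; auto;
      apply (commute_power G v); auto. }
  set (lam := comp (power G v be2 (p2 + q2)) A).
  apply al_ne, (hs lam (0,0) (a,0)).
  - unfold lam. rewrite rg_comp; [apply loop_power | apply (loop_composable G v)];
      auto using loop_power.
  - replace (dadd (a * p1, b * p2) (0,0)) with (dadd (dmul p2 (dg be2)) (dmul p1 (dg al1)))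
      by (rewrite db2, da1; deg_arith).
    rewrite <- da1. apply seg_commuting_prefix; auto; [lia|].
    apply seg_power_power_l; auto.
  - replace (dadd (a * q1, b * q2) (0,0)) with (dadd (dmul q2 (dg be2)) (dmul q1 (dg al2)))
      by (rewrite db2, da2; deg_arith).
    rewrite <- da2. apply seg_commuting_prefix; auto; [lia|].
    apply seg_power_power_r; auto; [congruence|lia].
Qed.

Lemma quartet_separates_rows p1 p2 q2 :
  p2 < q2 -> ~ shifts_agree G v (a * p1, b * p2) (a * p1, b * q2).
Proof.
  intros hp hs.
  set (B := comp (power G v be1 (S p2)) (power G v be2 q2)).
  assert (lB : loop G v B) by (apply loop_comp; apply loop_power; auto).
  set (lam := comp (power G v al1 p1) B).
  assert (hc : sc (power G v al1 p1) = rg B)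
    by (apply (loop_composable G v); auto using loop_power).
  apply be_ne, (hs lam (0,0) (0,b)).
  - unfold lam. rewrite rg_comp by exact hc. apply loop_power; auto.
  - replace (dadd (a * p1, b * p2) (0,0))
      with (dadd (dg (power G v al1 p1)) (dmul p2 (dg be1)))
      by (rewrite dg_power, da1, db1 by auto; deg_arith).
    rewrite <- db1. apply seg_comp_r; auto.
    apply seg_power_power_l; auto.
  - replace (dadd (a * p1, b * q2) (0,0))
      with (dadd (dg (power G v al1 p1)) (dmul q2 (dg be2)))
      by (rewrite dg_power, da1, db2 by auto; deg_arith).
    rewrite <- db2. apply seg_comp_r; auto.
    apply seg_power_power_r; auto; [congruence|lia].
Qed.

Lemma quartet_separates p1 p2 q1 q2 :
  (p1, p2) <> (q1, q2) -> ~ shifts_agree G v (a * p1, b * p2) (a * q1, b * q2).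
Proof.
  intro hne.
  destruct (lt_eq_lt_dec p1 q1) as [[h|<-]|h].
  - now apply quartet_separates_columns.
  - destruct (lt_eq_lt_dec p2 q2) as [[h|<-]|h].
    + now apply quartet_separates_rows.
    + contradiction.
    + intro hs. now apply (quartet_separates_rows p1 q2 p2), shifts_agree_sym.
  - intro hs. now apply (quartet_separates_columns q1 q2 p1 p2), shifts_agree_sym.
Qed.

End Quartet.

Lemma no_local_periodicity_of_quartet (G : twograph) (v : Obj G) :
  has_aperiodic_quartet G v -> no_local_periodicity G v.
Proof.
  intros (a & b & ha & hb & al1 & al2 & be1 & be2 & Q).
  destruct Q as (al_ne & be_ne & ra1 & sa1 & da1 & ra2 & sa2 & da2 & rb1 & sb1 & db1
                 & rb2 & sb2 & db2 & c1 & c2 & _ & _).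
  apply no_local_periodicity_of_shifts.
  intros [m1 m2] [n1 n2] hmn hs.
  apply (shifts_agree_mul G v (a * b)) in hs.
  apply (quartet_separates G v a b al1 al2 be1 be2) with
    (p1 := b * m1) (p2 := a * m2) (q1 := b * n1) (q2 := a * n2);
    try split; auto.
  - intro e; injection e; intros; apply hmn; f_equal; nia.
  - replace (a * (b * m1), b * (a * m2)) with (dmul (a * b) (m1, m2)) by deg_arith.
    replace (a * (b * n1), b * (a * n2)) with (dmul (a * b) (n1, n2)) by deg_arith.
    exact hs.
Qed.

Lemma has_aperiodic_quartet_Gamma (L : twograph) (H : Obj L -> Prop) (hH : hereditary L H)
  (v : Obj (Gamma L H hH)) :
  has_aperiodic_quartet L (proj1_sig v) -> has_aperiodic_quartet (Gamma L H hH) v.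
Proof.
  destruct v as [v hv]; simpl.
  intros (a & b & ha & hb & al1 & al2 & be1 & be2 & Q).
  destruct Q as (al_ne & be_ne & ra1 & sa1 & da1 & ra2 & sa2 & da2 & rb1 & sb1 & db1
                 & rb2 & sb2 & db2 & c21 & c22 & c11 & c12).
  assert (lift : forall x : Mor L, sc x = v -> ~ H (sc x)) by (intros x e; now rewrite e).
  exists a, b; split; [exact ha|]; split; [exact hb|].
  exists (exist _ al1 (lift _ sa1)), (exist _ al2 (lift _ sa2)),
    (exist _ be1 (lift _ sb1)), (exist _ be2 (lift _ sb2)).
  repeat split; simpl; try (apply sig_ext; simpl; assumption); try assumption.
  - intro e. apply al_ne. exact (f_equal (@proj1_sig _ _) e).
  - intro e. apply be_ne. exact (f_equal (@proj1_sig _ _) e).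
  - apply sig_ext. rewrite !Gcomp_val by (simpl; congruence). exact c21.
  - apply sig_ext. rewrite !Gcomp_val by (simpl; congruence). exact c22.
  - apply sig_ext. rewrite !Gcomp_val by (simpl; congruence). exact c11.
  - apply sig_ext. rewrite !Gcomp_val by (simpl; congruence). exact c12.
Qed.

Theorem proposition3p9 (L : twograph) :
  row_finite L -> no_sources L ->
  (forall u : Obj L, has_aperiodic_quartet L u) ->
  strongly_aperiodic L.
Proof.
  intros _ _ hq H hH _ _ v.
  apply no_local_periodicity_of_quartet, has_aperiodic_quartet_Gamma, hq.
Qed.
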